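(* Let $q\ge 1$ and let $\rho_{\rm ref}$ be the function defined in the context below. Then: (1) $\rho_{\rm ref}(0)=1$ and $\rho_{\rm ref}(1)=1/2$; (2) $\rho_{\rm ref}'(1)<0$; (3) $\rho_{\rm ref}(\mu)\ge 1/2$ for all $\mu\in[-1,1]$.
   Context: Let $(w_k,t_k)$, $k=1,\dots,q$, be the weights and nodes of the $q$-point Gauss–Legendre quadrature rule on $[-1,1]$. Thus $w_k>0$ and $-1<t_k<1$. The rule is symmetric: whenever $(w_k,t_k)$ is a weight–node pair, so is $(w_k,-t_k)$. It satisfies $\sum_{k=1}^q w_k=2$ and is exact for polynomials of degree at most $2q-1$. For real $\mu$ define $$\rho_{\rm ref}(\mu)=\frac12\sum_{k=1}^q w_k\,\frac{1+\mu s_k}{1+2\mu s_k+\mu^2},\qquad s_k=\sin(\pi t_k/2).$$ Equivalently, $\rho_{\rm ref}$ is the result of applying this quadrature rule to the Cauchy integral $\frac{1}{2\pi\iota}\oint_{|z|=1}\frac{dz}{z-\mu}$ (the indicator of the unit disk), with the circle parametrized by $\phi(t)=e^{\iota\frac{\pi}{2}(1+t)}$ for $-1\le t\le 3$ and the integral folded onto $[-1,1]$. *)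

From Stdlib Require Import Reals Lra Lia.
Open Scope R_scope.

Fixpoint fsum (n : nat) (f : nat -> R) : R :=
  match n with
  | O => 0
  | S m => fsum m f + f m
  end.

Definition peval (d : nat) (a : nat -> R) (x : R) : R :=
  fsum d (fun i => a i * x ^ i).

(* (w_k, t_k), k = 0..q-1, is the q-point Gauss-Legendre rule on [-1,1],
   together with the properties recorded in the paper's context. *)
Definition gauss_legendre (q : nat) (w t : nat -> R) : Prop :=
  (forall k, (k < q)%nat -> 0 < w k /\ -1 < t k < 1) /\
  (forall k j, (k < q)%nat -> (j < q)%nat -> k <> j -> t k <> t j) /\
  (forall k, (k < q)%nat -> exists j, (j < q)%nat /\ w j = w k /\ t j = - t k) /\
  fsum q w = 2 /\
  (* exact for all polynomials of degree at most 2q-1 *)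
  (forall a : nat -> R,
     exists pr : Riemann_integrable (peval (2 * q) a) (-1) 1,
       RiemannInt pr = fsum q (fun k => w k * peval (2 * q) a (t k))).

Definition rho_ref (q : nat) (w t : nat -> R) (mu : R) : R :=
  / 2 * fsum q (fun k =>
    w k * ((1 + mu * sin (PI * t k / 2)) /
           (1 + 2 * mu * sin (PI * t k / 2) + mu ^ 2))).

(* Write s_k = sin (PI t_k / 2) and K(mu, s) = (1 + mu s) / (1 + 2 mu s + mu^2),
   so that rho_ref mu = 1/2 * sum_k w_k K(mu, s_k).  Every node satisfies
   -1 < s_k < 1, and all three claims reduce to facts about the single
   kernel K for a fixed s in (-1, 1), transported to rho_ref because the
   weights are positive and sum to 2:
   - K(0, s) = 1 and K(1, s) = 1/2, so rho_ref is 1 and 1/2 there;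
   - dK/dmu (1, s) = -1 / (2 (1 + s)) < 0, and a positive combination of
     negative derivatives is negative;
   - K(mu, s) >= 1/2 for |mu| <= 1, since 2(1 + mu s) - (1 + 2 mu s + mu^2)
     = 1 - mu^2 >= 0, and a weighted mean of values >= 1/2 is >= 1/2. *)

From Stdlib Require Import Reals Lra Lia.
From Coquelicot Require Import Coquelicot.
Open Scope R_scope.

Lemma fsum_ext n f g :
  (forall k, (k < n)%nat -> f k = g k) -> fsum n f = fsum n g.
Proof.
  induction n as [|n IH]; simpl; intros H; [reflexivity|].
  rewrite IH, H; auto; intros; apply H; lia.
Qed.

Lemma fsum_le n f g :
  (forall k, (k < n)%nat -> f k <= g k) -> fsum n f <= fsum n g.
Proof.
  induction n as [|n IH]; simpl; intros H; [lra|].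
  assert (f n <= g n) by (apply H; lia).
  assert (fsum n f <= fsum n g) by (apply IH; intros; apply H; lia).
  lra.
Qed.

Lemma fsum_scal n c f : fsum n (fun k => c * f k) = c * fsum n f.
Proof. induction n as [|n IH]; simpl; [ring|]. rewrite IH; ring. Qed.

Lemma fsum_neg n f :
  (1 <= n)%nat -> (forall k, (k < n)%nat -> f k < 0) -> fsum n f < 0.
Proof.
  intros Hn H; destruct n as [|n]; [lia|]; simpl.
  assert (fsum n f <= fsum n (fun _ => 0)) by (apply fsum_le; intros; apply Rlt_le, H; lia).
  assert (fsum n (fun _ => 0) = 0) by (clear; induction n; simpl; lra).
  assert (f n < 0) by (apply H; lia).
  lra.
Qed.

Lemma fsum_weighted_const n (w f : nat -> R) c :
  (forall k, (k < n)%nat -> f k = c) ->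
  fsum n (fun k => w k * f k) = c * fsum n w.
Proof.
  intros H; rewrite <- fsum_scal; apply fsum_ext; intros k Hk; rewrite H; auto; ring.
Qed.

Lemma fsum_weighted_lower n (w f : nat -> R) c :
  (forall k, (k < n)%nat -> 0 <= w k /\ c <= f k) ->
  c * fsum n w <= fsum n (fun k => w k * f k).
Proof.
  intros H; rewrite <- fsum_scal; apply fsum_le; intros k Hk.
  destruct (H k Hk); nra.
Qed.

Lemma fsum_deriv n (F : nat -> R -> R) (L : nat -> R) x :
  (forall k, (k < n)%nat -> derivable_pt_lim (F k) x (L k)) ->
  derivable_pt_lim (fun y => fsum n (fun k => F k y)) x (fsum n L).
Proof.
  induction n as [|n IH]; simpl; intros H.
  - apply derivable_pt_lim_const.
  - apply (derivable_pt_lim_plus (fun y => fsum n (fun k => F k y)) (F n)).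
    + apply IH; intros; apply H; lia.
    + apply H; lia.
Qed.

(* The Cauchy kernel on the folded unit circle, at a node with sine s. *)
Definition kernel (mu s : R) : R := (1 + mu * s) / (1 + 2 * mu * s + mu ^ 2).

Definition node_sine (t : nat -> R) (k : nat) : R := sin (PI * t k / 2).

Lemma rho_ref_kernel q w t mu :
  rho_ref q w t mu = / 2 * fsum q (fun k => w k * kernel mu (node_sine t k)).
Proof. reflexivity. Qed.

Lemma sin_half_pi_bounds x : -1 < x < 1 -> -1 < sin (PI * x / 2) < 1.
Proof.
  intros Hx. pose proof PI_RGT_0.
  assert (-(PI/2) < PI * x / 2 < PI/2) by nra.
  split.
  - replace (-1) with (sin (-(PI/2))) by (rewrite sin_neg, sin_PI2; ring).
    apply sin_increasing_1; lra.
  - rewrite <- sin_PI2. apply sin_increasing_1; lra.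
Qed.

Section Kernel.
Variable s : R.
Hypothesis Hs : -1 < s < 1.

Lemma kernel_at_0 : kernel 0 s = 1.
Proof. unfold kernel; field. Qed.

Lemma kernel_at_1 : kernel 1 s = / 2.
Proof. unfold kernel; field; lra. Qed.

Lemma kernel_deriv_at_1 :
  derivable_pt_lim (fun mu => kernel mu s) 1 (- / (2 * (1 + s))).
Proof.
  apply is_derive_Reals; unfold kernel.
  auto_derive; [lra | field; lra].
Qed.

(* The denominator is (mu + s)^2 + (1 - s^2), hence positive. *)
Lemma kernel_denominator_pos mu : 0 < 1 + 2 * mu * s + mu ^ 2.
Proof.
  assert (0 <= (mu + s) ^ 2) by apply pow2_ge_0.
  assert (s * s < 1) by nra.
  nra.
Qed.

(* Key inequality: 2 (1 + mu s) - (1 + 2 mu s + mu^2) = 1 - mu^2 >= 0. *)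
Lemma kernel_ge_half mu : -1 <= mu <= 1 -> / 2 <= kernel mu s.
Proof.
  intros Hmu. pose proof (kernel_denominator_pos mu) as HD. unfold kernel.
  apply Rmult_le_reg_r with (1 + 2 * mu * s + mu ^ 2); auto.
  replace ((1 + mu * s) / (1 + 2 * mu * s + mu ^ 2) * (1 + 2 * mu * s + mu ^ 2))
    with (1 + mu * s) by (field; lra).
  nra.
Qed.

End Kernel.

Theorem theorem1 (q : nat) (w t : nat -> R) :
  (1 <= q)%nat ->
  gauss_legendre q w t ->
  (rho_ref q w t 0 = 1 /\ rho_ref q w t 1 = / 2) /\
  (exists l, derivable_pt_lim (rho_ref q w t) 1 l /\ l < 0) /\
  (forall mu, -1 <= mu <= 1 -> / 2 <= rho_ref q w t mu).
Proof.
  intros Hq [Hnodes [_ [_ [Hsum _]]]].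
  assert (Hk : forall k, (k < q)%nat -> 0 < w k /\ -1 < node_sine t k < 1).
  { intros k Hkq; destruct (Hnodes k Hkq) as [Hw Ht].
    split; [exact Hw | apply sin_half_pi_bounds, Ht]. }
  split; [split | split].
  - rewrite rho_ref_kernel, (fsum_weighted_const _ _ _ 1), Hsum; [lra|].
    intros; apply kernel_at_0.
  - rewrite rho_ref_kernel, (fsum_weighted_const _ _ _ (/ 2)), Hsum; [lra|].
    intros k Hkq; apply kernel_at_1, Hk, Hkq.
  - exists (/ 2 * fsum q (fun k => w k * - / (2 * (1 + node_sine t k)))); split.
    + apply (derivable_pt_lim_scal (fun mu => fsum q (fun k => w k * kernel mu (node_sine t k)))).
      apply (fsum_deriv q (fun k mu => w k * kernel mu (node_sine t k))).
      intros k Hkq.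
      apply (derivable_pt_lim_scal (fun mu => kernel mu (node_sine t k))).
      apply kernel_deriv_at_1, Hk, Hkq.
    + assert (fsum q (fun k => w k * - / (2 * (1 + node_sine t k))) < 0); [|lra].
      apply fsum_neg; auto; intros k Hkq; destruct (Hk k Hkq) as [Hw Hsk].
      assert (0 < / (2 * (1 + node_sine t k))) by (apply Rinv_0_lt_compat; lra).
      nra.
  - intros mu Hmu; rewrite rho_ref_kernel.
    assert (/ 2 * fsum q w <= fsum q (fun k => w k * kernel mu (node_sine t k))); [|lra].
    apply fsum_weighted_lower; intros k Hkq; destruct (Hk k Hkq).
    split; [lra | apply kernel_ge_half; auto].
Qed.
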